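(* Let $(T,\leq)$ be an ordered set and let $T^\ast$ be its ultrapower with respect to an ultrafilter $\mathcal{U}$ on $\mathbb{N}$. Then $T^\ast$ is complete (every nonempty subset of $T^\ast$ that is bounded from above has a least upper bound) if and only if $T$ is finite.
   Context: An ordered set is a nonempty set with a reflexive, antisymmetric, transitive and linear (total) relation $\leq$. An ultrafilter on $\mathbb{N}$ is a nonempty family $\mathcal{U}$ of subsets of $\mathbb{N}$ such that: (1) $K \in \mathcal{U}$, $K \subset L \subset \mathbb{N}$ imply $L \in \mathcal{U}$; (2) $K,L \in \mathcal{U}$ imply $K\cap L \in \mathcal{U}$; (3) every $K \in \mathcal{U}$ is infinite; (4) for every $K \subset \mathbb{N}$, $K \in \mathcal{U}$ or $\mathbb{N}\setminus K \in \mathcal{U}$. The ultrapower $T^\ast$: on the set $\mathcal{T}$ of all sequences $(a_n):\mathbb{N}\to T$ define $(a_n)\sim(b_n)$ iff $\{n : a_n = b_n\} \in \mathcal{U}$; this is an equivalence relation, $T^\ast$ is the set of its classes, $\overline{(a_n)}$ denotes the class of $(a_n)$, and $T^\ast$ is ordered by $\overline{(a_n)} \leq \overline{(b_n)}$ iff $\{ n : a_n \leq b_n\} \in \mathcal{U}$ (a well-defined total order). *)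

From Stdlib Require List.
From mathcomp Require Import all_boot all_order.
Set Implicit Arguments. Unset Strict Implicit. Unset Printing Implicit Defensive.
Import Order.TTheory.
Local Open Scope order_scope.

Definition finite_type (T : Type) : Prop :=
  exists l : list T, forall x : T, Stdlib.Lists.List.In x l.

Definition finite_natset (K : nat -> Prop) : Prop :=
  exists l : list nat, forall k : nat, K k -> Stdlib.Lists.List.In k l.

Definition is_ultrafilter (U : (nat -> Prop) -> Prop) : Prop :=
  (exists K, U K) /\
  (forall K L : nat -> Prop, U K -> (forall n, K n -> L n) -> U L) /\
  (forall K L : nat -> Prop, U K -> U L -> U (fun n => K n /\ L n)) /\
  (forall K : nat -> Prop, U K -> ~ finite_natset K) /\
  (forall K : nat -> Prop, U K \/ U (fun n => ~ K n)).

Section Ultrapower.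
Context {d : Order.disp_t} (T : orderType d) (U : (nat -> Prop) -> Prop).

Definition useq_equiv (a b : nat -> T) : Prop := U (fun n => a n = b n).

Definition uclass (a : nat -> T) : (nat -> T) -> Prop := fun b => useq_equiv a b.

Definition ultrapower : Type :=
  { S : (nat -> T) -> Prop | exists a : nat -> T, S = uclass a }.

Definition ultrapower_le (x y : ultrapower) : Prop :=
  exists a b : nat -> T, proj1_sig x = uclass a /\ proj1_sig y = uclass b /\
    U (fun n => a n <= b n).

Definition ultrapower_complete : Prop :=
  forall A : ultrapower -> Prop,
    (exists x, A x) ->
    (exists u, forall x, A x -> ultrapower_le x u) ->
    exists l, (forall x, A x -> ultrapower_le x l) /\
      (forall u, (forall x, A x -> ultrapower_le x u) -> ultrapower_le l u).
End Ultrapower.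

From mathcomp Require Import all_boot all_order.
From Stdlib Require Import Classical ClassicalEpsilon FunctionalExtensionality.
From Stdlib Require Import PropExtensionality ProofIrrelevance.
From Stdlib Require List.
Set Implicit Arguments. Unset Strict Implicit. Unset Printing Implicit Defensive.
Import Order.TTheory Order.NatMonotonyTheory.
Local Open Scope order_scope.

(* If T is finite, a sequence takes U-almost everywhere one single value, so
   T^* is a copy of T and every nonempty subset has a maximum.  If T is
   infinite, it contains a strictly monotone sequence; by the self-duality of
   Dedekind completeness we may assume it is increasing, t_0 < t_1 < ....  The
   constants [t_k] are bounded by the diagonal class [t]; if [b] were their
   supremum, then c_n := t_(J_n - 1), where J_n is the last j <= n with
   t_j <= b_n, would again be an upper bound, whereas b_n > c_n almost
   everywhere. *)

Definition finite_set (X : Type) (P : X -> Prop) : Prop :=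
  exists l : list X, forall x, P x -> List.In x l.

Section FiniteSets.
Variable X : Type.
Implicit Types P Q : X -> Prop.

Lemma finite_set0 : finite_set (fun _ : X => False).
Proof. by exists nil. Qed.

Lemma finite_set1 (x : X) : finite_set (fun y => y = x).
Proof. by exists (x :: nil)%list => y ->; left. Qed.

Lemma finite_setU P Q :
  finite_set P -> finite_set Q -> finite_set (fun x => P x \/ Q x).
Proof.
move=> [lP HP] [lQ HQ]; exists (lP ++ lQ)%list => x Px.
by apply/List.in_or_app; case: Px => [/HP|/HQ]; [left|right].
Qed.

Lemma infinite_setD P Q :
  ~ finite_set P -> finite_set Q -> exists x, P x /\ ~ Q x.
Proof.
move=> infP [l Hl]; apply: NNPP => noPQ; apply: infP; exists l => x Px.
by apply: Hl; apply: NNPP => nQx; apply: noPQ; exists x.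
Qed.

End FiniteSets.

Lemma dependent_choice_seq (X : Type) (S : X -> Prop) (R : X -> X -> Prop) x0 :
  S x0 -> (forall x, S x -> exists y, S y /\ R x y) ->
  exists s : nat -> X, forall n, R (s n) (s n.+1).
Proof.
move=> Sx0 step.
have [f Hf] : exists f : X -> X, forall x, S x -> S (f x) /\ R x (f x).
  apply: (choice (fun x y => S x -> S y /\ R x y)) => x.
  have [/step [y Hy]|nSx] := classic (S x); first by exists y.
  by exists x.
have S_iter n : S (iter n f x0) by elim: n => //= n /Hf [].
by exists (fun n => iter n f x0) => n; case: (Hf _ (S_iter n)).
Qed.

Lemma infinite_monotone_seq (d : Order.disp_t) (T : orderType d) :
  ~ finite_type T ->
  exists s : nat -> T, (forall n, s n < s n.+1) \/ (forall n, s n.+1 < s n).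
Proof.
move=> infT.
have infT_set : ~ finite_set (fun _ : T => True).
  by move=> [l Hl]; apply: infT; exists l => x; apply: Hl.
pose upper_finite (x : T) := finite_set (fun z => x < z).
have [finF|infF] := classic (finite_set upper_finite).
- have [x0 [_ Fx0]] := infinite_setD infT_set finF.
  have step x : ~ upper_finite x -> exists y, ~ upper_finite y /\ x < y.
    by move=> /infinite_setD/(_ finF) [y [xy Fy]]; exists y.
  have [s Hs] := dependent_choice_seq (S := fun x => ~ upper_finite x) Fx0 step.
  by exists s; left.
- have [x0 [Fx0 _]] := infinite_setD infF (@finite_set0 T).
  have step x : upper_finite x -> exists y, upper_finite y /\ y < x.
    move=> Fx; have [y [Fy yx]] := infinite_setD infF (finite_setU (finite_set1 x) Fx).
    exists y; split => //.
    by case: (ltgtP y x) => // [xy|yx_eq]; case: yx; [right|left].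
  have [s Hs] := dependent_choice_seq Fx0 step.
  by exists s; right.
Qed.

Lemma finite_set_has_max (d : Order.disp_t) (T : orderType d) (P : T -> Prop) :
  finite_set P -> (exists x, P x) -> exists2 m, P m & forall x, P x -> x <= m.
Proof.
move=> [l]; elim: l P => [|t l IH] P Pl [x Px]; first by case: (Pl x Px).
have [[y [Py yt]]|only_t] := classic (exists y, P y /\ y <> t); last first.
  have Pt y : P y -> y = t by move=> Py; apply: NNPP => yt; apply: only_t; exists y.
  by exists t => [|z /Pt ->]; rewrite -?(Pt x Px).
have [|m [Pm _] m_max] := IH (fun y => P y /\ y <> t) _ (ex_intro _ y (conj Py yt)).
  by move=> z [/Pl [tz|//] zt]; case: zt.
have below_m z : P z -> z <> t -> z <= m by move=> Pz zt; apply: m_max.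
have [Pt|nPt] := classic (P t); last first.
  by exists m => // z Pz; apply: below_m => // zt; apply: nPt; rewrite -zt.
have [tm|mt] := leP t m.
  by exists m => // z Pz; have [->|] := classic (z = t); last exact: below_m.
exists t => // z Pz; have [->|zt] := classic (z = t) => //.
exact: le_trans (below_m z Pz zt) (ltW mt).
Qed.

Fixpoint last_upto (p : pred nat) (m : nat) : nat :=
  if m is m'.+1 then (if p m then m else last_upto p m') else 0.

Lemma leq_last_upto (p : pred nat) i m : p i -> (i <= m)%N -> (i <= last_upto p m)%N.
Proof.
move=> pi; elim: m => [|m IH] /=; first by rewrite leqn0 => /eqP ->.
case: ifP => // pm; rewrite leq_eqVlt => /orP [/eqP im|]; last exact: IH.
by rewrite im pm in pi.
Qed.

Lemma last_uptoP (p : pred nat) m : (0 < last_upto p m)%N -> p (last_upto p m).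
Proof. by elim: m => //= m IH; case: ifP. Qed.

Section Ultrafilter.
Variable U : (nat -> Prop) -> Prop.
Hypothesis hU : is_ultrafilter U.

Lemma uf_mono (K L : nat -> Prop) : U K -> (forall n, K n -> L n) -> U L.
Proof. by case: hU => _ [mono _]; apply: mono. Qed.

Lemma uf_and (K L : nat -> Prop) : U K -> U L -> U (fun n => K n /\ L n).
Proof. by case: hU => _ [_ [inter _]]; apply: inter. Qed.

Lemma uf_all (K : nat -> Prop) : (forall n, K n) -> U K.
Proof. by case: hU => [[L UL] _] allK; apply: (uf_mono UL) => n _. Qed.

Lemma uf_nonempty (K : nat -> Prop) : U K -> exists n, K n.
Proof.
case: hU => _ [_ [_ [nonfinite _]]] UK; apply: NNPP => noK.
by apply: (nonfinite _ UK); exists nil => n Kn; apply: noK; exists n.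
Qed.

Lemma uf_ge k : U (fun n => (k <= n)%N).
Proof.
case: hU => _ [_ [_ [nonfinite ultra]]].
have [Ult|] := ultra (fun n => (n < k)%N); last first.
  by move=> Uge; apply: (uf_mono Uge) => n nk; rewrite leqNgt; apply/negP.
exfalso; apply: (nonfinite _ Ult); exists (List.seq 0 k) => n /ssrnat.ltP nk.
by apply/List.in_seq; split; [apply/ssrnat.leP|].
Qed.

Lemma uf_const_of_finite (X : Type) (l : list X) (a : nat -> X) :
  U (fun n => List.In (a n) l) -> exists x, U (fun n => a n = x).
Proof.
case: hU => _ [_ [_ [_ ultra]]].
elim: l => [|x l IH] Ul; first by have [n []] := uf_nonempty Ul.
have [Ux|Unx] := ultra (fun n => a n = x); first by exists x.
by apply: IH; apply: (uf_mono (uf_and Ul Unx)) => n [[xa|//] nax]; case: nax.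
Qed.

End Ultrafilter.

Section UltrapowerOrder.
Context {d : Order.disp_t} (T : orderType d) (U : (nat -> Prop) -> Prop).

Definition ucls (a : nat -> T) : ultrapower T U :=
  exist _ (uclass U a) (ex_intro _ a erefl).

Lemma ucls_surj (x : ultrapower T U) : exists a, x = ucls a.
Proof.
case: x => S [a eS]; exists a; subst S.
by rewrite /ucls; congr exist; apply: proof_irrelevance.
Qed.

Lemma ultrapower_le_dual (x y : ultrapower T U) :
  ultrapower_le (T:=T^d) (U:=U) x y <-> ultrapower_le y x.
Proof. by split=> [[a [b [ea [eb ab]]]]|[a [b [ea [eb ab]]]]]; exists b, a. Qed.

Hypothesis hU : is_ultrafilter U.

Lemma ucls_eq (a b : nat -> T) : U (fun n => a n = b n) -> ucls a = ucls b.
Proof.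
move=> ab; apply: subset_eq_compat; apply: functional_extensionality => c.
apply: propositional_extensionality; rewrite /uclass /useq_equiv.
by split=> Uc; apply: (uf_mono hU (uf_and hU ab Uc)) => n [-> ->].
Qed.

Lemma le_ucls (a b : nat -> T) :
  ultrapower_le (ucls a) (ucls b) <-> U (fun n => a n <= b n).
Proof.
split=> [[a' [b' [/= ea [eb ab']]]]|]; last by exists a, b.
have aa' : uclass U a' a by rewrite -ea; apply: uf_all.
have bb' : uclass U b' b by rewrite -eb; apply: uf_all.
by apply: (uf_mono hU (uf_and hU ab' (uf_and hU aa' bb'))) => n [+ [<- <-]].
Qed.

Lemma ultrapower_const_of_finite :
  finite_type T -> forall x : ultrapower T U, exists t, x = ucls (fun _ => t).
Proof.
move=> [l Hl] x; have [a ->] := ucls_surj x.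
have [t at_] := uf_const_of_finite hU (uf_all hU (fun n => Hl (a n))).
by exists t; apply: ucls_eq.
Qed.

Lemma ultrapower_complete_of_finite : finite_type T -> ultrapower_complete T U.
Proof.
move=> finT A [x Ax] _.
have const := ultrapower_const_of_finite finT.
have finA : finite_set (fun t => A (ucls (fun _ => t))).
  by case: finT => l Hl; exists l => t _.
have neA : exists t, A (ucls (fun _ => t)).
  by have [t ext] := const x; exists t; rewrite -ext.
have [m Am m_max] := finite_set_has_max finA neA.
exists (ucls (fun _ => m)); split=> [y Ay|u]; last by apply.
have [t ety] := const y; rewrite ety in Ay *.
by apply/le_ucls; apply: (uf_all hU) => n; apply: m_max.
Qed.

Lemma ultrapower_incomplete_of_increasing (t : nat -> T) :
  (forall n, t n < t n.+1) -> ~ ultrapower_complete T U.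
Proof.
move=> t_inc complete; have t_mono := incnP t_inc.
pose A x := exists k, x = ucls (fun _ => t k).
have A_bounded x : A x -> ultrapower_le x (ucls t).
  by move=> [k ->]; apply/le_ucls; apply: (uf_mono hU (uf_ge hU k)) => n; rewrite t_mono.
have [l [l_ub l_least]] :=
  complete A (ex_intro _ _ (ex_intro _ 0 erefl)) (ex_intro _ _ A_bounded).
have [b el] := ucls_surj l; subst l.
have below_b k : U (fun n => t k <= b n) by apply/le_ucls; apply: l_ub; exists k.
pose J n := last_upto (fun j => t j <= b n) n.
have J_large k : U (fun n => k <= J n)%N.
  apply: (uf_mono hU (uf_and hU (below_b k) (uf_ge hU k))) => n [].
  exact: leq_last_upto.
have b_le : U (fun n => b n <= t (J n).-1).
  apply/le_ucls; apply: l_least => _ [k ->]; apply/le_ucls.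
  by apply: (uf_mono hU (J_large k.+1)) => n; rewrite t_mono; case: (J n).
have [n [bJ J_pos]] := uf_nonempty hU (uf_and hU b_le (J_large 1)).
move: (last_uptoP J_pos) bJ; rewrite -/(J n); case: (J n) J_pos => // j _ /= tb bt.
by have := le_trans tb bt; rewrite t_mono leEnat ltnn.
Qed.

End UltrapowerOrder.

Definition sup_complete (X : Type) (le : X -> X -> Prop) : Prop :=
  forall A : X -> Prop, (exists x, A x) -> (exists u, forall x, A x -> le x u) ->
    exists l, (forall x, A x -> le x l) /\
      (forall u, (forall x, A x -> le x u) -> le l u).

(* The infimum of A is the supremum of its lower bounds. *)
Lemma sup_complete_flip (X : Type) (le : X -> X -> Prop) :
  sup_complete le -> sup_complete (fun x y => le y x).
Proof.
move=> complete A [a Aa] [b b_lb].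
have [l [l_ub l_least]] := complete (fun y => forall x, A x -> le y x)
  (ex_intro _ b b_lb) (ex_intro _ a (fun y y_lb => y_lb a Aa)).
by exists l; split=> [x Ax|u u_lb]; [apply: l_least => y; apply | apply: l_ub].
Qed.

Lemma ultrapower_complete_dual (d : Order.disp_t) (T : orderType d) U :
  ultrapower_complete T U -> ultrapower_complete T^d U.
Proof.
move=> /sup_complete_flip complete.
change (sup_complete (ultrapower_le (T:=T^d) (U:=U))).
have -> // : ultrapower_le (T:=T^d) (U:=U) = fun x y => ultrapower_le (T:=T) y x.
apply: functional_extensionality => x; apply: functional_extensionality => y.
exact/propositional_extensionality/ultrapower_le_dual.
Qed.

Theorem mainTheorem6 (d : Order.disp_t) (T : orderType d)
  (U : (nat -> Prop) -> Prop) :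
  inhabited T -> is_ultrafilter U ->
  (ultrapower_complete T U <-> finite_type T).
Proof.
move=> _ hU; split; last exact: ultrapower_complete_of_finite.
move=> complete; apply: NNPP => infT.
have [s [s_inc|s_dec]] := infinite_monotone_seq infT.
- exact: (ultrapower_incomplete_of_increasing hU s_inc complete).
- exact: (ultrapower_incomplete_of_increasing (T:=T^d) hU s_dec
    (ultrapower_complete_dual complete)).
Qed.
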